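(* Let $h:(\mathbb{R}^n,0)\to(\mathbb{R}^n,0)$ be an (SSP) bi-Lipschitz homeomorphism germ, and let $A\subset\mathbb{R}^n$ be a set-germ at $0$ with $0\in\overline{A}$. Then $A$ satisfies condition (SSP) if and only if $h(A)$ satisfies condition (SSP).
   Context: For a set-germ $A\subset\mathbb{R}^k$ at $0$ with $0\in\overline A$, the direction set is $D(A)=\{a\in S^{k-1}:\exists\, x_i\in A\setminus\{0\},\ x_i\to0,\ x_i/\|x_i\|\to a\}$. For sequences, $\|u_m\|\ll\|v_m\|,\|w_m\|$ means $\|u_m\|/\|v_m\|\to0$ and $\|u_m\|/\|w_m\|\to0$. A set-germ $A\subset\mathbb{R}^k$ with $0\in\overline A$ satisfies condition (SSP) if for every sequence $a_m\in\mathbb{R}^k$ tending to $0$ with $\lim a_m/\|a_m\|\in D(A)$ there is a sequence $b_m\in A$ with $\|a_m-b_m\|\ll\|a_m\|,\|b_m\|$. A map germ $h:(\mathbb{R}^n,0)\to(\mathbb{R}^n,0)$ is an (SSP) map if its graph $\{(x,h(x))\}\subset\mathbb{R}^n\times\mathbb{R}^n$ satisfies condition (SSP) at $(0,0)$. A bi-Lipschitz homeomorphism germ is a homeomorphism germ $h$ with $h(0)=0$ and constants $0<K_1\le K_2$ with $K_1\|x-y\|\le\|h(x)-h(y)\|\le K_2\|x-y\|$ near $0$; it is an (SSP) bi-Lipschitz homeomorphism if it is moreover an (SSP) map. *)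

(* R : realType, R^k represented as row vectors 'rV[R]_k. *)
From HB Require Import structures.
From mathcomp Require Import all_boot all_order all_algebra.
From mathcomp Require Import reals.
Set Implicit Arguments. Unset Strict Implicit. Unset Printing Implicit Defensive.
Import Order.TTheory GRing.Theory Num.Theory.
Local Open Scope ring_scope.

Section SSPDefs.
Variable R : realType.

Definition enorm {k : nat} (x : 'rV[R]_k) : R :=
  Num.sqrt (\sum_(i < k) (x ord0 i) ^+ 2).

Definition seq_cvg {k : nat} (u : nat -> 'rV[R]_k) (l : 'rV[R]_k) : Prop :=
  forall eps : R, 0 < eps -> exists N : nat, forall m : nat,
    (N <= m)%N -> enorm (u m - l) < eps.

Definition zero_in_closure {k : nat} (A : 'rV[R]_k -> Prop) : Prop :=
  forall eps : R, 0 < eps -> exists x, A x /\ enorm x < eps.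

Definition direction_set {k : nat} (A : 'rV[R]_k -> Prop) (a : 'rV[R]_k) : Prop :=
  enorm a = 1 /\
  exists x : nat -> 'rV[R]_k,
    (forall i, A (x i) /\ x i != 0) /\ seq_cvg x 0 /\
    seq_cvg (fun i => (enorm (x i))^-1 *: x i) a.

(* ||u_m|| << ||v_m||: the ratio is eventually defined and tends to 0 *)
Definition seq_ll {k : nat} (u v : nat -> 'rV[R]_k) : Prop :=
  (exists N : nat, forall m : nat, (N <= m)%N -> v m != 0) /\
  forall eps : R, 0 < eps -> exists N : nat, forall m : nat,
    (N <= m)%N -> enorm (u m) / enorm (v m) < eps.

Definition SSP {k : nat} (A : 'rV[R]_k -> Prop) : Prop :=
  forall a : nat -> 'rV[R]_k,
    seq_cvg a 0 ->
    (exists d, direction_set A d /\ seq_cvg (fun m => (enorm (a m))^-1 *: a m) d) ->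
    exists b : nat -> 'rV[R]_k,
      (forall m, A (b m)) /\
      seq_ll (fun m => a m - b m) a /\ seq_ll (fun m => a m - b m) b.

(* graph of the germ h (represented on the ball of radius r), in R^n x R^n = R^(n+n) *)
Definition graph_germ {n : nat} (h : 'rV[R]_n -> 'rV[R]_n) (r : R) :
  'rV[R]_(n + n) -> Prop :=
  fun z => exists x, enorm x < r /\ z = row_mx x (h x).

Definition SSP_map {n : nat} (h : 'rV[R]_n -> 'rV[R]_n) (r : R) : Prop :=
  SSP (graph_germ h r).

(* h is a bi-Lipschitz homeomorphism germ, represented on the ball of radius r
   with constants K1 <= K2; we also record that its image is a neighbourhood of 0
   (a consequence of invariance of domain, part of "homeomorphism germ"). *)
Definition bilip_homeo_germ {n : nat} (h : 'rV[R]_n -> 'rV[R]_n) (r K1 K2 : R) : Prop :=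
  0 < r /\ h 0 = 0 /\ 0 < K1 /\ K1 <= K2 /\
  (forall x y, enorm x < r -> enorm y < r ->
     K1 * enorm (x - y) <= enorm (h x - h y) /\
     enorm (h x - h y) <= K2 * enorm (x - y)) /\
  (exists s : R, 0 < s /\ forall y, enorm y < s -> exists x, enorm x < r /\ h x = y).

Definition image_germ {n : nat} (h : 'rV[R]_n -> 'rV[R]_n) (r : R)
  (A : 'rV[R]_n -> Prop) : 'rV[R]_n -> Prop :=
  fun y => exists x, A x /\ enorm x < r /\ h x = y.

End SSPDefs.

(* Directions of the graph of h are pairs (G1, G2) with G1, G2 nonzero, and by
   (SSP) of the graph the curve t (G1, G2) is shadowed by graph points
   (p_t, h p_t) up to o(t).  Hence, by the bi-Lipschitz bounds, a sequence
   tangent to G1 is sent by h to a sequence tangent to G2, and conversely.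
   Every direction of A (resp. h(A)) is, along a subsequence, the first
   (resp. second) component of a direction of the graph.  So if a_m is tangent
   to D(h(A)), its preimages x_m are tangent to D(A); (SSP) of A supplies b_m
   in A with |x_m - b_m| = o(|x_m|), and h(b_m) is the required witness.
   The converse is symmetric. *)

From HB Require Import structures.
From mathcomp Require Import all_boot all_order all_algebra.
From mathcomp Require Import boolp classical_sets filter reals normedtype sequences.
From mathcomp Require Import ring lra.
Import Order.TTheory GRing.Theory Num.Theory.
Import numFieldNormedType.Exports.
Local Open Scope ring_scope.
Local Open Scope classical_set_scope.
Set Implicit Arguments. Unset Strict Implicit. Unset Printing Implicit Defensive.

Section EuclideanNorm.
Variable R : realType.

Definition dotv {k : nat} (x y : 'rV[R]_k) : R := \sum_(i < k) x ord0 i * y ord0 i.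

Lemma dotvv_ge0 k (x : 'rV[R]_k) : 0 <= dotv x x.
Proof. by apply: sumr_ge0 => i _; rewrite -expr2 sqr_ge0. Qed.

Lemma enorm_ge0 k (x : 'rV[R]_k) : 0 <= enorm x.
Proof. exact: sqrtr_ge0. Qed.

Lemma enorm_sqr k (x : 'rV[R]_k) : enorm x ^+ 2 = dotv x x.
Proof.
rewrite sqr_sqrtr; last by apply: sumr_ge0 => i _; exact: sqr_ge0.
by apply: eq_bigr => i _; rewrite expr2.
Qed.

Lemma enorm0 k : enorm (0 : 'rV[R]_k) = 0.
Proof. by rewrite /enorm big1 ?sqrtr0 // => i _; rewrite mxE expr0n. Qed.

Lemma enorm_eq0 k (x : 'rV[R]_k) : (enorm x == 0) = (x == 0).
Proof.
apply/eqP/eqP => [|->]; last exact: enorm0.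
move=> /eqP; rewrite sqrtr_eq0 => x0; apply/rowP => i; rewrite mxE.
have sum0 : \sum_(j < k) x ord0 j ^+ 2 = 0.
  by apply/eqP; rewrite eq_le x0 sumr_ge0 // => j _; exact: sqr_ge0.
have /eqP := @psumr_eq0P _ _ xpredT _ (fun j _ => sqr_ge0 (x ord0 j)) sum0 i isT.
by rewrite sqrf_eq0 => /eqP.
Qed.

Lemma enorm_gt0 k (x : 'rV[R]_k) : (0 < enorm x) = (x != 0).
Proof. by rewrite lt_neqAle enorm_ge0 andbT eq_sym enorm_eq0. Qed.

Lemma enormZ k (c : R) (x : 'rV[R]_k) : enorm (c *: x) = `|c| * enorm x.
Proof.
rewrite /enorm -sqrtr_sqr -sqrtrM ?sqr_ge0 // mulr_sumr.
by congr Num.sqrt; apply: eq_bigr => i _; rewrite mxE exprMn.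
Qed.

Lemma enormN k (x : 'rV[R]_k) : enorm (- x) = enorm x.
Proof. by rewrite -scaleN1r enormZ normrN normr1 mul1r. Qed.

Lemma enormB k (x y : 'rV[R]_k) : enorm (x - y) = enorm (y - x).
Proof. by rewrite -enormN opprB. Qed.

Lemma dotv_lin2 k (p q : R) (u v : 'rV[R]_k) :
  dotv (p *: u + q *: v) (p *: u + q *: v) =
  p ^+ 2 * dotv u u + 2 * p * q * dotv u v + q ^+ 2 * dotv v v.
Proof.
rewrite /dotv !mulr_sumr -!big_split /=; apply: eq_bigr => i _.
by rewrite !mxE; ring.
Qed.

Lemma cauchy_schwarz k (x y : 'rV[R]_k) : dotv x y ^+ 2 <= dotv x x * dotv y y.
Proof.
have [->|y0] := eqVneq y 0.
  have dotv0 (z : 'rV[R]_k) : dotv z 0 = 0.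
    by rewrite /dotv big1 // => i _; rewrite mxE mulr0.
  by rewrite !dotv0 expr0n mulr0.
have b0 : 0 < dotv y y by rewrite -enorm_sqr exprn_gt0 // enorm_gt0.
(* expand |<y,y> x - <x,y> y|^2 >= 0 *)
have := dotvv_ge0 (dotv y y *: x + (- dotv x y) *: y).
rewrite dotv_lin2 => h.
have : 0 <= dotv y y * (dotv x x * dotv y y - dotv x y ^+ 2) by lra.
by rewrite pmulr_rge0 // subr_ge0.
Qed.

Lemma enormD k (x y : 'rV[R]_k) : enorm (x + y) <= enorm x + enorm y.
Proof.
have cs : dotv x y <= enorm x * enorm y.
  apply: le_trans (ler_norm _) _.
  rewrite -(ler_pXn2r (n := 2)) ?nnegrE ?normr_ge0 ?mulr_ge0 ?enorm_ge0 //.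
  by rewrite real_normK ?num_real // exprMn !enorm_sqr cauchy_schwarz.
rewrite -(ler_pXn2r (n := 2)) ?nnegrE ?addr_ge0 ?enorm_ge0 //.
have -> : x + y = 1 *: x + 1 *: y by rewrite !scale1r.
rewrite enorm_sqr dotv_lin2 sqrrD !enorm_sqr; lra.
Qed.

Lemma enorm_dist k (x y : 'rV[R]_k) : `|enorm x - enorm y| <= enorm (x - y).
Proof.
have := enormD (x - y) y; have := enormD (y - x) x.
rewrite !subrK enormB ler_norml; lra.
Qed.

Lemma dotv_row_mx k1 k2 (x : 'rV[R]_k1) (y : 'rV[R]_k2) :
  dotv (row_mx x y) (row_mx x y) = dotv x x + dotv y y.
Proof.
by rewrite /dotv big_split_ord; congr (_ + _); apply: eq_bigr => i _;
  rewrite ?row_mxEl ?row_mxEr.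
Qed.

Lemma enorm_row_mx k1 k2 (x : 'rV[R]_k1) (y : 'rV[R]_k2) :
  enorm (row_mx x y) = Num.sqrt (enorm x ^+ 2 + enorm y ^+ 2).
Proof. by rewrite !enorm_sqr -dotv_row_mx -enorm_sqr sqrtr_sqr ger0_norm ?enorm_ge0. Qed.

Lemma enorm_row_mxl k1 k2 (x : 'rV[R]_k1) (y : 'rV[R]_k2) :
  enorm x <= enorm (row_mx x y).
Proof.
rewrite enorm_row_mx -(ler_pXn2r (n := 2)) ?nnegrE ?sqrtr_ge0 ?enorm_ge0 //.
rewrite [X in _ <= X]sqr_sqrtr ?addr_ge0 ?sqr_ge0 //; have := sqr_ge0 (enorm y); lra.
Qed.

Lemma enorm_row_mxr k1 k2 (x : 'rV[R]_k1) (y : 'rV[R]_k2) :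
  enorm y <= enorm (row_mx x y).
Proof.
rewrite enorm_row_mx -(ler_pXn2r (n := 2)) ?nnegrE ?sqrtr_ge0 ?enorm_ge0 //.
rewrite [X in _ <= X]sqr_sqrtr ?addr_ge0 ?sqr_ge0 //; have := sqr_ge0 (enorm x); lra.
Qed.

Lemma enorm_row_mx_le k1 k2 (x : 'rV[R]_k1) (y : 'rV[R]_k2) :
  enorm (row_mx x y) <= enorm x + enorm y.
Proof.
have x0 := enorm_ge0 x; have y0 := enorm_ge0 y.
rewrite enorm_row_mx -(ler_pXn2r (n := 2)) ?nnegrE ?sqrtr_ge0 ?addr_ge0 //.
rewrite [X in X <= _]sqr_sqrtr ?addr_ge0 ?sqr_ge0 //; nra.
Qed.

Lemma norm_coord_le_enorm k (x : 'rV[R]_k) j : `|x ord0 j| <= enorm x.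
Proof.
rewrite -sqrtr_sqr ler_wsqrtr // (bigD1 j) //= lerDl.
by apply: sumr_ge0 => i _; exact: sqr_ge0.
Qed.

End EuclideanNorm.

Section Directions.
Variable R : realType.

Definition dir {k : nat} (x : 'rV[R]_k) : 'rV[R]_k := (enorm x)^-1 *: x.

Lemma dir0 k : dir (0 : 'rV[R]_k) = 0.
Proof. by rewrite /dir scaler0. Qed.

Lemma enorm_dir k (x : 'rV[R]_k) : x != 0 -> enorm (dir x) = 1.
Proof.
rewrite -enorm_gt0 => xp.
by rewrite /dir enormZ ger0_norm ?invr_ge0 ?enorm_ge0 // mulVf ?gt_eqF.
Qed.

Lemma dir_neq0 k (x : 'rV[R]_k) : enorm (dir x) = 1 -> x != 0.
Proof. by apply: contra_eqN => /eqP->; rewrite dir0 enorm0 eq_sym oner_eq0. Qed.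

Lemma dir_id k (x : 'rV[R]_k) : enorm x = 1 -> dir x = x.
Proof. by move=> x1; rewrite /dir x1 invr1 scale1r. Qed.

Lemma dirZ k (c : R) (x : 'rV[R]_k) : 0 < c -> dir (c *: x) = dir x.
Proof.
move=> c0; rewrite /dir enormZ gtr0_norm // scalerA invfM mulrAC mulVf ?gt_eqF //.
by rewrite mul1r.
Qed.

Lemma enorm_scale_dir k (x : 'rV[R]_k) : enorm x *: dir x = x.
Proof.
have [->|x0] := eqVneq x 0; first by rewrite dir0 scaler0.
by rewrite /dir scalerA mulfV ?scale1r // gt_eqF // enorm_gt0.
Qed.

(* |x| (dir x' - dir x) = (x' - x) + (|x| - |x'|) dir x', and ||x| - |x'|| <= |x' - x| *)
Lemma enorm_dirB_le k (x x' : 'rV[R]_k) :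
  enorm x * enorm (dir x' - dir x) <= 2 * enorm (x' - x).
Proof.
have [->|x0] := eqVneq x 0; first by rewrite enorm0 mul0r mulr_ge0 ?enorm_ge0.
have [->|x'0] := eqVneq x' 0.
  by rewrite dir0 !sub0r !enormN enorm_dir // mulr1; have := enorm_ge0 x; lra.
rewrite -[enorm x]ger0_norm ?enorm_ge0 // -enormZ.
have -> : enorm x *: (dir x' - dir x) = (x' - x) + (enorm x - enorm x') *: dir x'.
  by rewrite scalerBr scalerBl !enorm_scale_dir [RHS]addrC addrA subrK.
apply: le_trans (enormD _ _) _.
rewrite enormZ enorm_dir // mulr1 [enorm (x' - x)]enormB.
have := enorm_dist x x'; lra.
Qed.

End Directions.

Section Asymptotics.
Variable R : realType.
Implicit Types (k : nat) (t : nat -> R).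

Lemma nearoP (P : nat -> Prop) :
  (\forall m \near \oo, P m) <-> exists N, forall m, (N <= m)%N -> P m.
Proof. by split=> [[N _ hN]|[N hN]]; exists N. Qed.

Lemma near_reindex (P : nat -> Prop) (f : nat -> nat) :
  (forall i, (i <= f i)%N) ->
  (\forall m \near \oo, P m) -> \forall m \near \oo, P (f m).
Proof.
move=> hf /nearoP[N hN]; apply/nearoP; exists N => m Nm.
exact/hN/(leq_trans Nm).
Qed.

Lemma near_choice T (P : nat -> T -> Prop) (x0 : T) :
  (\forall m \near \oo, exists x, P m x) ->
  exists f : nat -> T, \forall m \near \oo, P m (f m).
Proof.
move=> hP; have [f hf] : {f : nat -> T & forall m, (exists x, P m x) -> P m (f m)}.
  apply: (@choice _ _ (fun m y => (exists x, P m x) -> P m y)) => m.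
  have [[x Px]|nP] := pselect (exists x, P m x).
    by exists x.
  by exists x0 => /nP.
by exists f; apply: filterS hP.
Qed.

Lemma seq_cvgP k (u : nat -> 'rV[R]_k) l :
  seq_cvg u l <-> forall eps, 0 < eps -> \forall m \near \oo, enorm (u m - l) < eps.
Proof. by split=> hu eps /hu /nearoP. Qed.

Definition seq_o {k : nat} (w : nat -> 'rV[R]_k) (t : nat -> R) : Prop :=
  forall eps, 0 < eps -> \forall m \near \oo, enorm (w m) <= eps * t m.

Lemma seq_llP k (w a : nat -> 'rV[R]_k) :
  seq_ll w a <-> (\forall m \near \oo, a m != 0) /\ seq_o w (fun m => enorm (a m)).
Proof.
split=> [[/nearoP a0 wa]|[a0 wa]].
  split=> // eps /wa /nearoP; apply: filterS2 a0 => m; rewrite -enorm_gt0 => am.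
  by rewrite ltr_pdivrMr // => /ltW.
split=> [|eps e0]; first exact/nearoP.
have e2 : 0 < eps / 2 by rewrite divr_gt0.
apply/nearoP; apply: filterS2 a0 (wa _ e2) => m.
rewrite -enorm_gt0 => am wam; rewrite ltr_pdivrMr //; apply: le_lt_trans wam _.
by rewrite ltr_pM2r // ltr_pdivrMr // ltr_pMr // ltr1n.
Qed.

Lemma seq_oD k (w1 w2 : nat -> 'rV[R]_k) t :
  seq_o w1 t -> seq_o w2 t -> seq_o (fun m => w1 m + w2 m) t.
Proof.
move=> h1 h2 eps e0; have e2 : 0 < eps / 2 by rewrite divr_gt0.
apply: filterS2 (h1 _ e2) (h2 _ e2) => m a1 a2.
by apply: le_trans (enormD _ _) _; lra.
Qed.

Lemma seq_o_trans k (x y z : nat -> 'rV[R]_k) t :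
  seq_o (fun m => x m - y m) t -> seq_o (fun m => y m - z m) t ->
  seq_o (fun m => x m - z m) t.
Proof.
move=> hxy hyz eps e0; apply: filterS (seq_oD hxy hyz e0) => m.
by rewrite addrA subrK.
Qed.

Lemma seq_o_sym k (x y : nat -> 'rV[R]_k) t :
  seq_o (fun m => x m - y m) t -> seq_o (fun m => y m - x m) t.
Proof. by move=> hxy eps /hxy; apply: filterS => m; rewrite enormB. Qed.

Lemma seq_o_normW k k' (w : nat -> 'rV[R]_k) (w' : nat -> 'rV[R]_k') t C :
  0 < C -> (\forall m \near \oo, enorm (w' m) <= C * enorm (w m)) ->
  seq_o w t -> seq_o w' t.
Proof.
move=> C0 hw ho eps e0; apply: filterS2 hw (ho _ (divr_gt0 e0 C0)) => m h1 h2.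
apply: le_trans h1 _; rewrite -ler_pdivlMl // mulrA [_^-1 * _]mulrC.
by apply: le_trans h2 _.
Qed.

Lemma seq_o_rateW k (w : nat -> 'rV[R]_k) t t' C :
  0 < C -> (\forall m \near \oo, t m <= C * t' m) -> seq_o w t -> seq_o w t'.
Proof.
move=> C0 ht ho eps e0; apply: filterS2 ht (ho _ (divr_gt0 e0 C0)) => m h1 h2.
apply: le_trans h2 (le_trans (ler_wpM2l (ltW (divr_gt0 e0 C0)) h1) _).
by rewrite mulrA divfK ?gt_eqF.
Qed.

(* Once |a - b| = o(|a|), |b| is eventually comparable to |a|, so both estimates of (SSP) follow. *)
Lemma seq_o_seq_ll k (a b : nat -> 'rV[R]_k) :
  seq_o (fun m => a m - b m) (fun m => enorm (a m)) ->
  (\forall m \near \oo, a m != 0) ->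
  seq_ll (fun m => a m - b m) a /\ seq_ll (fun m => a m - b m) b.
Proof.
move=> hab a0; have hb : \forall m \near \oo, enorm (a m) <= 2 * enorm (b m).
  have half : 0 < 1 / 2 :> R by rewrite divr_gt0.
  apply: filterS (hab _ half) => m.
  have := enorm_dist (a m) (b m); rewrite ler_norml => /andP[_]; lra.
split; apply/seq_llP; split=> //.
  apply: filterS2 a0 hb => m; rewrite -!enorm_gt0; lra.
exact: seq_o_rateW hb hab.
Qed.

End Asymptotics.

Section Convergence.
Variable R : realType.
Implicit Types (k : nat).

Lemma eq_seq_cvg k (u v : nat -> 'rV[R]_k) l :
  (forall m, u m = v m) -> seq_cvg u l -> seq_cvg v l.
Proof. by move=> uv hu eps /hu[N hN]; exists N => m /hN; rewrite uv. Qed.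

Lemma seq_cvg_reindex k (u : nat -> 'rV[R]_k) l (f : nat -> nat) :
  (forall i, (i <= f i)%N) -> seq_cvg u l -> seq_cvg (fun i => u (f i)) l.
Proof. by move=> hf /seq_cvgP hu; apply/seq_cvgP => eps /hu; apply: near_reindex. Qed.

Lemma seq_cvg_const k (c : 'rV[R]_k) : seq_cvg (fun=> c) c.
Proof. by apply/seq_cvgP => eps e0; apply: nearW => m; rewrite subrr enorm0. Qed.

Lemma seq_cvg_enorm k (u : nat -> 'rV[R]_k) l eps : seq_cvg u l -> 0 < eps ->
  \forall m \near \oo, `|enorm (u m) - enorm l| < eps.
Proof. by move=> /seq_cvgP hu /hu; apply: filterS => m; apply: le_lt_trans (enorm_dist _ _). Qed.

Lemma seq_cvg_enorm_ge k (u : nat -> 'rV[R]_k) l c : seq_cvg u l ->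
  (\forall m \near \oo, c <= enorm (u m)) -> c <= enorm l.
Proof.
move=> hu hc; apply/ler_addgt0Pr => eps e0.
have [m [cm]] := filter_ex (filterI hc (seq_cvg_enorm hu e0)).
by rewrite ltr_norml => /andP[_]; lra.
Qed.

Lemma seq_cvg_enorm_le k (u : nat -> 'rV[R]_k) l c : seq_cvg u l ->
  (\forall m \near \oo, enorm (u m) <= c) -> enorm l <= c.
Proof.
move=> hu hc; apply/ler_addgt0Pr => eps e0.
have [m [cm]] := filter_ex (filterI hc (seq_cvg_enorm hu e0)).
by rewrite ltr_norml => /andP[+ _]; lra.
Qed.

Lemma seq_cvg_uniq k (u : nat -> 'rV[R]_k) l1 l2 :
  seq_cvg u l1 -> seq_cvg u l2 -> l1 = l2.
Proof.
move=> /seq_cvgP h1 /seq_cvgP h2; apply/eqP; rewrite -subr_eq0 -enorm_eq0.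
rewrite eq_le enorm_ge0 andbT; apply/ler_addgt0Pr => eps e0.
have e2 : 0 < eps / 2 by rewrite divr_gt0.
have [m [a1 a2]] := filter_ex (filterI (h1 _ e2) (h2 _ e2)).
have -> : l1 - l2 = - (u m - l1) + (u m - l2) by rewrite opprB addrA subrK.
by apply: le_trans (enormD _ _) _; rewrite enormN; lra.
Qed.

Lemma seq_cvg0_le k k' (u : nat -> 'rV[R]_k) (v : nat -> 'rV[R]_k') C :
  seq_cvg u 0 -> 0 < C -> (\forall m \near \oo, enorm (v m) <= C * enorm (u m)) ->
  seq_cvg v 0.
Proof.
move=> /seq_cvgP hu C0 hvu; apply/seq_cvgP => eps e0.
apply: filterS2 hvu (hu _ (divr_gt0 e0 C0)) => m; rewrite !subr0 => h1 h2.
by apply: le_lt_trans h1 _; rewrite -ltr_pdivlMl // mulrC.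
Qed.

Lemma seq_cvg_dir_neq0 k (a : nat -> 'rV[R]_k) d :
  enorm d = 1 -> seq_cvg (fun m => dir (a m)) d -> \forall m \near \oo, a m != 0.
Proof.
move=> d1 /seq_cvgP /(_ _ ltr01); apply: filterS => m.
by apply: contraTN => /eqP->; rewrite dir0 sub0r enormN d1 ltxx.
Qed.

Lemma seq_cvg_dir_o k (a a' : nat -> 'rV[R]_k) d :
  seq_cvg (fun m => dir (a m)) d ->
  seq_o (fun m => a' m - a m) (fun m => enorm (a m)) ->
  seq_cvg (fun m => dir (a' m)) d.
Proof.
move=> /seq_cvgP hd ho; apply/seq_cvgP => eps e0.
have e2 : 0 < eps / 2 by rewrite divr_gt0.
have e4 : 0 < eps / 4 by rewrite divr_gt0.
apply: filterS2 (hd _ e2) (ho _ e4) => m h1 h2.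
rewrite -(subrK (dir (a m)) (dir (a' m))) -addrA.
apply: le_lt_trans (enormD _ _) _.
suff : enorm (dir (a' m) - dir (a m)) <= eps / 2 by lra.
have [am0|am0] := eqVneq (a m) 0.
  move: h2; rewrite am0 enorm0 mulr0 subr0 => h2.
  have /eqP-> : a' m == 0 by rewrite -enorm_eq0 eq_le h2 enorm_ge0.
  by rewrite dir0 subrr enorm0 ltW.
have ap : 0 < enorm (a m) by rewrite enorm_gt0.
rewrite -(ler_pM2l ap); apply: le_trans (enorm_dirB_le _ _) _.
by rewrite -ler_pdivlMl //; lra.
Qed.

Lemma seq_cvg_dir k (a : nat -> 'rV[R]_k) G :
  G != 0 -> seq_cvg a G -> seq_cvg (fun m => dir (a m)) (dir G).
Proof.
move=> G0 /seq_cvgP hG; apply: (seq_cvg_dir_o (a := fun=> G)) => [|eps e0].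
  exact: seq_cvg_const.
have Gp : 0 < enorm G by rewrite enorm_gt0.
by apply: filterS (hG _ (mulr_gt0 e0 Gp)) => m /ltW.
Qed.

Lemma seq_o_dir k (a : nat -> 'rV[R]_k) G : G != 0 ->
  seq_cvg (fun m => dir (a m)) (dir G) ->
  seq_o (fun m => a m - (enorm (a m) / enorm G) *: G)
        (fun m => enorm (a m) / enorm G).
Proof.
move=> G0 /seq_cvgP hd eps e0; have Gp : 0 < enorm G by rewrite enorm_gt0.
apply: filterS (hd _ (divr_gt0 e0 Gp)) => m /ltW hm.
have -> : a m - (enorm (a m) / enorm G) *: G = enorm (a m) *: (dir (a m) - dir G).
  by rewrite scalerBr enorm_scale_dir /dir scalerA.
by rewrite enormZ ger0_norm ?enorm_ge0 // mulrCA ler_wpM2l ?enorm_ge0.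
Qed.

Lemma seq_cvg_dir_scale k (x : nat -> 'rV[R]_k) (t : nat -> R) (G : 'rV[R]_k) :
  G != 0 -> (\forall m \near \oo, 0 < t m) ->
  seq_o (fun m => x m - t m *: G) t -> seq_cvg (fun m => dir (x m)) (dir G).
Proof.
move=> G0 tp ho; have Gp : 0 < enorm G by rewrite enorm_gt0.
apply: (seq_cvg_dir_o (a := fun m => t m *: G)).
  apply/seq_cvgP => eps e0; apply: filterS tp => m tm.
  by rewrite dirZ // subrr enorm0.
apply: (seq_o_rateW (C := (enorm G)^-1)) ho; first by rewrite invr_gt0.
apply: filterS tp => m tm.
by rewrite enormZ gtr0_norm // mulrCA mulVf ?mulr1 ?gt_eqF.
Qed.

Lemma enorm_ratio_vanishing k (a : nat -> 'rV[R]_k) (G : 'rV[R]_k) : G != 0 ->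
  seq_cvg a 0 -> (\forall m \near \oo, a m != 0) ->
  (\forall m \near \oo, 0 < enorm (a m) / enorm G) /\
  forall eps, 0 < eps -> \forall m \near \oo, enorm (a m) / enorm G < eps.
Proof.
move=> G0 /seq_cvgP a0 an; have Gp : 0 < enorm G by rewrite enorm_gt0.
split=> [|eps e0]; first by apply: filterS an => m am; rewrite divr_gt0 ?enorm_gt0.
apply: filterS (a0 _ (mulr_gt0 e0 Gp)) => m; rewrite subr0 => am.
by rewrite ltr_pdivrMr.
Qed.

Lemma seq_cvg0_o k (x b : nat -> 'rV[R]_k) : seq_cvg x 0 ->
  seq_o (fun m => x m - b m) (fun m => enorm (x m)) -> seq_cvg b 0.
Proof.
move=> x0 hxb; apply: (seq_cvg0_le x0 (C := 2)) => //.
apply: filterS (hxb _ ltr01) => m; rewrite mul1r => hm.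
have := enormD (b m - x m) (x m); rewrite subrK enormB; lra.
Qed.

Lemma seq_cvg_row_mx k1 k2 (u : nat -> 'rV[R]_k1) (v : nat -> 'rV[R]_k2) l1 l2 :
  seq_cvg (fun m => row_mx (u m) (v m)) (row_mx l1 l2) ->
  seq_cvg u l1 /\ seq_cvg v l2.
Proof.
move=> /seq_cvgP huv; split; apply/seq_cvgP => eps /huv; apply: filterS => m;
  rewrite opp_row_mx add_row_mx; apply: le_lt_trans;
  [exact: enorm_row_mxl | exact: enorm_row_mxr].
Qed.

End Convergence.

Section BolzanoWeierstrass.
Variable R : realType.

Lemma bolzano_weierstrass_real (u : nat -> R) C : (forall i, `|u i| <= C) ->
  exists2 f : nat -> nat, (forall i, (i <= f i)%N) &
  exists l, forall eps, 0 < eps -> \forall m \near \oo, `|u (f m) - l| < eps.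
Proof.
move=> uC; have [|f /increasing_seqP finc fc] := bolzano_weierstrass (u_ := u).
  exists C; split; first exact: num_real.
  by move=> x Cx y _; apply: le_trans (uC y) (ltW Cx).
exists f; first by elim=> [//|i IH]; exact: leq_ltn_trans IH (finc i).
exists (limn (u \o f)) => eps e0; move/cvgrPdist_lt: fc => /(_ eps e0).
by apply: filterS => m; rewrite distrC.
Qed.

Lemma bolzano_weierstrass_coords k (w : nat -> 'rV[R]_k) C (s : seq 'I_k) :
  (forall i j, `|w i ord0 j| <= C) ->
  exists2 f : nat -> nat, (forall i, (i <= f i)%N) &
  exists l : 'rV[R]_k, forall eps, 0 < eps -> \forall m \near \oo,
    forall j, j \in s -> `|w (f m) ord0 j - l ord0 j| < eps.
Proof.
move=> wC; elim: s => [|j s [f hf [l hl]]].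
  by exists id => //; exists 0 => eps _; apply: nearW => m j.
have [g hg [lj hlj]] := bolzano_weierstrass_real (fun i => wC (f i) j).
exists (f \o g) => [i|]; first exact: leq_trans (hg i) (hf _).
exists (\row_j' if j' == j then lj else l ord0 j') => eps e0.
apply: filterS2 (near_reindex hg (hl eps e0)) (hlj eps e0) => m hs hj j'.
rewrite in_cons mxE; case: eqP => [-> _ //|_ /= j's]; exact: hs.
Qed.

Lemma enorm_le_coord k (v : 'rV[R]_k) e :
  0 <= e -> (forall j, `|v ord0 j| <= e) -> enorm v <= k%:R * e.
Proof.
move=> e0 ve; rewrite -(ler_pXn2r (n := 2)) ?nnegrE ?enorm_ge0 ?mulr_ge0 //.
have kk : (k <= k ^ 2)%N by case: k {v ve} => // k; rewrite -{1}(expn1 k.+1) leq_pexp2l.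
rewrite enorm_sqr exprMn -natrX; apply: le_trans (_ : k%:R * e ^+ 2 <= _); last first.
  by rewrite ler_wpM2r ?sqr_ge0 // ler_nat.
have -> : k%:R * e ^+ 2 = \sum_(j < k) e ^+ 2 by rewrite sumr_const card_ord mulr_natl.
apply: ler_sum => j _.
by rewrite -expr2 -real_normK ?num_real // ler_pXn2r ?nnegrE ?normr_ge0.
Qed.

Lemma bolzano_weierstrass_rV k (w : nat -> 'rV[R]_k) C :
  (forall i, enorm (w i) <= C) ->
  exists2 f : nat -> nat, (forall i, (i <= f i)%N) &
  exists l, seq_cvg (fun i => w (f i)) l.
Proof.
move=> wC; have [f hf [l hl]] := bolzano_weierstrass_coords (enum 'I_k)
  (fun i j => le_trans (norm_coord_le_enorm _ j) (wC i)).
exists f => //; exists l; apply/seq_cvgP => eps e0.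
have k1 : 0 < k.+1%:R :> R by [].
apply: filterS (hl _ (divr_gt0 e0 k1)) => m hm.
apply: le_lt_trans (enorm_le_coord (e := eps / k.+1%:R) _ _) _.
- by rewrite divr_ge0 ?ltW.
- by move=> j; rewrite !mxE; apply/ltW/hm/mem_enum.
- by rewrite mulrA ltr_pdivrMr // mulrC ltr_pM2l // ltr_nat.
Qed.

End BolzanoWeierstrass.

Section SSPSequences.
Variable R : realType.
Implicit Types (k : nat).

Lemma direction_set_seq k (A : 'rV[R]_k -> Prop) (x : nat -> 'rV[R]_k) d :
  (forall i, A (x i) /\ x i != 0) -> seq_cvg x 0 ->
  seq_cvg (fun i => dir (x i)) d -> direction_set A d.
Proof.
move=> xA x0 xd; split; last by exists x.
have dir1 : \forall m \near \oo, enorm (dir (x m)) = 1.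
  by apply: nearW => m; rewrite enorm_dir //; case: (xA m).
apply/le_anti/andP; split.
  by apply: seq_cvg_enorm_le xd _; apply: filterS dir1 => m ->.
by apply: seq_cvg_enorm_ge xd _; apply: filterS dir1 => m ->.
Qed.

Lemma SSP_seq_oP k (A : 'rV[R]_k -> Prop) :
  SSP A <-> forall a : nat -> 'rV[R]_k, seq_cvg a 0 ->
    (exists d, direction_set A d /\ seq_cvg (fun m => dir (a m)) d) ->
    exists b : nat -> 'rV[R]_k, (\forall m \near \oo, A (b m)) /\
      seq_o (fun m => a m - b m) (fun m => enorm (a m)).
Proof.
split=> hA a a0 ad.
  have [b [bA [/seq_llP[_ ab] _]]] := hA a a0 ad.
  by exists b; split=> //; apply: nearW.
have [d [[d1 [x [xA _]]] ad']] := ad.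
have [b [bA ab]] := hA a a0 ad.
pose b' m := if pselect (A (b m)) is left _ then b m else x 0%N.
have bb' : \forall m \near \oo, b' m = b m.
  by apply: filterS bA => m bAm; rewrite /b'; case: pselect.
exists b'; split.
  by move=> m; rewrite /b'; case: pselect => // _; case: (xA 0%N).
apply: seq_o_seq_ll (seq_cvg_dir_neq0 d1 ad').
by move=> eps /ab; apply: filterS2 bb' => m ->.
Qed.

End SSPSequences.

Section BiLipschitzGerm.
Variable R : realType.
Variables (n : nat) (h : 'rV[R]_n -> 'rV[R]_n) (r K1 K2 : R).
Hypothesis hbl : bilip_homeo_germ h r K1 K2.

Lemma bilip_radius_gt0 : 0 < r.
Proof. by case: hbl. Qed.

Lemma bilip_K1_gt0 : 0 < K1.
Proof. by case: hbl => _ [_ []]. Qed.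

Lemma bilip_K2_gt0 : 0 < K2.
Proof. by case: hbl => _ [_ [K1p [K12 _]]]; apply: lt_le_trans K12. Qed.

Lemma bilip_lower x y : enorm x < r -> enorm y < r ->
  K1 * enorm (x - y) <= enorm (h x - h y).
Proof. by case: hbl => _ [_ [_ [_ [hK _]]]] xr yr; case: (hK x y xr yr). Qed.

Lemma bilip_upper x y : enorm x < r -> enorm y < r ->
  enorm (h x - h y) <= K2 * enorm (x - y).
Proof. by case: hbl => _ [_ [_ [_ [hK _]]]] xr yr; case: (hK x y xr yr). Qed.

Lemma bilip_lower0 x : enorm x < r -> K1 * enorm x <= enorm (h x).
Proof.
move=> xr; have := bilip_lower xr (y := 0); rewrite enorm0 => /(_ bilip_radius_gt0).
by case: hbl => _ [-> _]; rewrite !subr0.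
Qed.

Lemma bilip_upper0 x : enorm x < r -> enorm (h x) <= K2 * enorm x.
Proof.
move=> xr; have := bilip_upper xr (y := 0); rewrite enorm0 => /(_ bilip_radius_gt0).
by case: hbl => _ [-> _]; rewrite !subr0.
Qed.

Lemma bilip_map0 : h 0 = 0.
Proof. by case: hbl => _ []. Qed.

Lemma bilip_neq0 x : enorm x < r -> x != 0 -> h x != 0.
Proof.
rewrite -!enorm_gt0 => xr xp; apply: lt_le_trans (bilip_lower0 xr).
by rewrite mulr_gt0 ?bilip_K1_gt0.
Qed.

Lemma bilip_preimage_seq (a : nat -> 'rV[R]_n) : seq_cvg a 0 ->
  exists x, seq_cvg x 0 /\ \forall m \near \oo, enorm (x m) < r /\ h (x m) = a m.
Proof.
move=> a0; have [s s0 hs] : exists2 s, 0 < s & forall y, enorm y < s ->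
    exists x, enorm x < r /\ h x = y.
  by case: hbl => _ [_ [_ [_ [_ [s [s0 hs]]]]]]; exists s.
have [x hx] : exists x, \forall m \near \oo, enorm (x m) < r /\ h (x m) = a m.
  apply: (near_choice (P := fun m x => enorm x < r /\ h x = a m) 0).
  by apply: filterS (proj1 (seq_cvgP a 0) a0 _ s0) => m; rewrite subr0 => /hs.
exists x; split=> //.
apply: (seq_cvg0_le a0 (C := K1^-1)); first by rewrite invr_gt0 bilip_K1_gt0.
apply: filterS hx => m [xr <-]; rewrite ler_pdivlMl ?bilip_K1_gt0 //.
exact: bilip_lower0.
Qed.

Lemma graph_dir_subseq (y : nat -> 'rV[R]_n) :
  (forall i, enorm (y i) < r /\ y i != 0) ->
  exists2 f : nat -> nat, (forall i, (i <= f i)%N) & exists G1 G2,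
  [/\ G1 != 0, G2 != 0,
      seq_cvg (fun i => dir (row_mx (y (f i)) (h (y (f i))))) (row_mx G1 G2),
      seq_cvg (fun i => dir (y (f i))) (dir G1) &
      seq_cvg (fun i => dir (h (y (f i)))) (dir G2)].
Proof.
move=> yr; pose g i := row_mx (y i) (h (y i)).
have K1p := bilip_K1_gt0; have K2p := bilip_K2_gt0.
have yp i : 0 < enorm (y i) by rewrite enorm_gt0; case: (yr i).
have gp i : 0 < enorm (g i) := lt_le_trans (yp i) (enorm_row_mxl _ _).
have g_le i : enorm (g i) <= enorm (y i) + enorm (h (y i)) := enorm_row_mx_le _ _.
have [f hf [G hG]] : exists2 f : nat -> nat, (forall i, (i <= f i)%N) &
    exists G, seq_cvg (fun i => dir (g (f i))) G.
  apply: (bolzano_weierstrass_rV (w := fun i => dir (g i)) (C := 1)) => i.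
  by rewrite enorm_dir // -enorm_gt0.
exists f => //; exists (lsubmx G), (rsubmx G).
rewrite -[G]hsubmxK in hG.
have [c1 c2] := seq_cvg_row_mx (eq_seq_cvg (fun i => scale_row_mx _ _ _) hG).
have G10 : lsubmx G != 0.
  rewrite -enorm_gt0; apply: lt_le_trans (_ : 0 < (1 + K2)^-1) _.
    by rewrite invr_gt0 addr_gt0.
  apply: seq_cvg_enorm_ge c1 _; apply: nearW => m.
  rewrite enormZ ger0_norm ?invr_ge0 ?enorm_ge0 // mulrC ler_pdivlMr //.
  rewrite mulrC ler_pdivrMr ?addr_gt0 //.
  have := bilip_upper0 (proj1 (yr (f m))); have := g_le (f m); nra.
have G20 : rsubmx G != 0.
  rewrite -enorm_gt0; apply: lt_le_trans (_ : 0 < K1 / (1 + K1)) _.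
    by rewrite divr_gt0 ?addr_gt0.
  apply: seq_cvg_enorm_ge c2 _; apply: nearW => m.
  rewrite enormZ ger0_norm ?invr_ge0 ?enorm_ge0 // [X in _ <= X]mulrC ler_pdivlMr //.
  rewrite mulrAC ler_pdivrMr ?addr_gt0 //.
  have := bilip_lower0 (proj1 (yr (f m))); have := g_le (f m); nra.
split=> //.
- apply: eq_seq_cvg _ (seq_cvg_dir G10 c1) => i.
  by rewrite dirZ // invr_gt0.
- apply: eq_seq_cvg _ (seq_cvg_dir G20 c2) => i.
  by rewrite dirZ // invr_gt0.
Qed.

Lemma graph_direction (B : 'rV[R]_n -> Prop) (y : nat -> 'rV[R]_n) :
  (forall i, [/\ B (y i), enorm (y i) < r & y i != 0]) -> seq_cvg y 0 ->
  exists G1 G2, [/\ direction_set (graph_germ h r) (row_mx G1 G2),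
    direction_set B (dir G1), direction_set (image_germ h r B) (dir G2),
    forall d, seq_cvg (fun i => dir (y i)) d -> d = dir G1 &
    forall d, seq_cvg (fun i => dir (h (y i))) d -> d = dir G2].
Proof.
move=> yB y0; have yr i : enorm (y i) < r /\ y i != 0 by case: (yB i).
have [f hf [G1 [G2 [_ _ cG c1 c2]]]] := graph_dir_subseq yr.
have yf0 := seq_cvg_reindex hf y0.
have K2p := bilip_K2_gt0.
exists G1, G2; split.
- apply: direction_set_seq cG => [i|].
    have [yr' yn] := yr (f i); split; first by exists (y (f i)).
    by rewrite -enorm_gt0 (lt_le_trans _ (enorm_row_mxl _ _)) ?enorm_gt0.
  apply: (seq_cvg0_le yf0 (C := 1 + K2)); rewrite ?addr_gt0 //.
  apply: nearW => m; apply: le_trans (enorm_row_mx_le _ _) _.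
  by have := bilip_upper0 (proj1 (yr (f m))); lra.
- by apply: direction_set_seq c1 => // i; case: (yB (f i)).
- apply: direction_set_seq c2 => [i|].
    have [yBi yr' yn] := yB (f i); split; first by exists (y (f i)).
    exact: bilip_neq0.
  apply: (seq_cvg0_le yf0 (C := K2)) => //.
  by apply: nearW => m; apply: bilip_upper0; case: (yr (f m)).
- by move=> d yd; apply: seq_cvg_uniq (seq_cvg_reindex hf yd) c1.
- by move=> d hyd; apply: seq_cvg_uniq (seq_cvg_reindex hf hyd) c2.
Qed.

Hypothesis hssp : SSP_map h r.

(* (SSP) of the graph, applied to the points t m (G1, G2) of its tangent cone *)
Lemma graph_tangent G1 G2 (t : nat -> R) :
  direction_set (graph_germ h r) (row_mx G1 G2) ->
  (\forall m \near \oo, 0 < t m) ->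
  (forall eps, 0 < eps -> \forall m \near \oo, t m < eps) ->
  exists p : nat -> 'rV[R]_n, (forall m, enorm (p m) < r) /\
    seq_o (fun m => p m - t m *: G1) t /\ seq_o (fun m => h (p m) - t m *: G2) t.
Proof.
move=> HD tp t0; have [G_1 _] := HD; set G := row_mx G1 G2.
have tG : \forall m \near \oo, enorm (t m *: G) = t m.
  by apply: filterS tp => m tm; rewrite enormZ G_1 gtr0_norm ?mulr1.
have c0 : seq_cvg (fun m => t m *: G) 0.
  by apply/seq_cvgP => eps e0; apply: filterS2 tG (t0 _ e0) => m; rewrite subr0 => ->.
have cG : seq_cvg (fun m => dir (t m *: G)) G.
  apply/seq_cvgP => eps e0; apply: filterS tp => m tm.
  by rewrite dirZ // dir_id // subrr enorm0.
have [b [bG [/seq_llP[_ hcb] _]]] := hssp c0 (ex_intro _ G (conj HD cG)).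
have [p hp] := choice bG.
exists p; split; first by move=> m; case: (hp m).
have hct : seq_o (fun m => t m *: G - b m) t.
  by apply: (seq_o_rateW (C := 1)) hcb => //; apply: filterS tG => m ->; rewrite mul1r.
have tGb m : t m *: G - b m = row_mx (t m *: G1 - p m) (t m *: G2 - h (p m)).
  by case: (hp m) => _ ->; rewrite scale_row_mx opp_row_mx add_row_mx.
split; apply: (seq_o_normW (C := 1)) hct => //; apply: nearW => m;
  rewrite mul1r enormB tGb; [exact: enorm_row_mxl | exact: enorm_row_mxr].
Qed.

Lemma tangent_image G1 G2 (t : nat -> R) (x : nat -> 'rV[R]_n) :
  direction_set (graph_germ h r) (row_mx G1 G2) ->
  (\forall m \near \oo, 0 < t m) ->
  (forall eps, 0 < eps -> \forall m \near \oo, t m < eps) ->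
  (\forall m \near \oo, enorm (x m) < r) ->
  seq_o (fun m => x m - t m *: G1) t -> seq_o (fun m => h (x m) - t m *: G2) t.
Proof.
move=> HD tp t0 xr hx; have [p [pr [hp1 hp2]]] := graph_tangent HD tp t0.
apply: seq_o_trans hp2.
apply: (seq_o_normW (C := K2)) (seq_o_trans hx (seq_o_sym hp1)).
  exact: bilip_K2_gt0.
by apply: filterS xr => m xm; apply: bilip_upper.
Qed.

Lemma tangent_preimage G1 G2 (t : nat -> R) (x : nat -> 'rV[R]_n) :
  direction_set (graph_germ h r) (row_mx G1 G2) ->
  (\forall m \near \oo, 0 < t m) ->
  (forall eps, 0 < eps -> \forall m \near \oo, t m < eps) ->
  (\forall m \near \oo, enorm (x m) < r) ->
  seq_o (fun m => h (x m) - t m *: G2) t -> seq_o (fun m => x m - t m *: G1) t.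
Proof.
move=> HD tp t0 xr hx; have [p [pr [hp1 hp2]]] := graph_tangent HD tp t0.
have K1p := bilip_K1_gt0; apply: seq_o_trans hp1.
apply: (seq_o_normW (C := K1^-1)) (seq_o_trans hx (seq_o_sym hp2)).
  by rewrite invr_gt0.
by apply: filterS xr => m xm; rewrite ler_pdivlMl //; apply: bilip_lower.
Qed.

Lemma SSP_image (A : 'rV[R]_n -> Prop) : SSP A -> SSP (image_germ h r A).
Proof.
move=> /SSP_seq_oP hA; apply/SSP_seq_oP => a a0 [d [[d1 [z [zA [z0 zd]]]] ad]].
have K1p := bilip_K1_gt0; have K2p := bilip_K2_gt0.
have [y hy] := choice (fun i => proj1 (zA i)).
have yB i : [/\ A (y i), enorm (y i) < r & y i != 0].
  have [yA [yr yz]] := hy i; split=> //.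
  by apply: contraNneq (proj2 (zA i)) => y0; rewrite -yz y0 bilip_map0.
have y0 : seq_cvg y 0.
  apply: (seq_cvg0_le z0 (C := K1^-1)); first by rewrite invr_gt0.
  by apply: nearW => m; have [_ [yr <-]] := hy m; rewrite ler_pdivlMl //; apply: bilip_lower0.
have [G1 [G2 [HD DA _ _ dG2]]] := graph_direction yB y0.
have dE : d = dir G2.
  by apply: dG2; apply: eq_seq_cvg _ zd => i; have [_ [_ ->]] := hy i.
rewrite dE in d1 ad; have G10 := dir_neq0 (proj1 DA); have G20 := dir_neq0 d1.
pose t m := enorm (a m) / enorm G2.
have [tp t0] := enorm_ratio_vanishing G20 a0 (seq_cvg_dir_neq0 d1 ad).
have [x [x0 xr]] := bilip_preimage_seq a0.
have hx : seq_o (fun m => x m - t m *: G1) t.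
  apply: (tangent_preimage (x := x) HD tp t0).
    by apply: filterS xr => m [].
  apply: (seq_o_normW (C := 1)) (seq_o_dir G20 ad) => //.
  by apply: filterS xr => m [_ ->]; rewrite mul1r.
have [b [bA xb]] := hA x x0 (ex_intro _ (dir G1) (conj DA (seq_cvg_dir_scale G10 tp hx))).
have br : \forall m \near \oo, enorm (b m) < r.
  have /seq_cvgP/(_ r bilip_radius_gt0) := seq_cvg0_o x0 xb.
  by apply: filterS => m; rewrite subr0.
exists (fun m => h (b m)); split.
  by apply: filterS2 bA br => m bAm bm; exists (b m).
apply: (seq_o_rateW (C := K1^-1)); first by rewrite invr_gt0.
  by apply: filterS xr => m [xm <-]; rewrite ler_pdivlMl //; apply: bilip_lower0.
apply: (seq_o_normW (C := K2)) xb => //.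
by apply: filterS2 xr br => m [xm <-] bm; apply: bilip_upper.
Qed.

Lemma SSP_preimage (A : 'rV[R]_n -> Prop) : SSP (image_germ h r A) -> SSP A.
Proof.
move=> /SSP_seq_oP hA; apply/SSP_seq_oP => a a0 [d [[d1 [y [yA [y0 yd]]]] ad]].
have K1p := bilip_K1_gt0; have K2p := bilip_K2_gt0; have rp := bilip_radius_gt0.
have /nearoP[N hN] := proj1 (seq_cvgP _ _) y0 r rp.
have shiftN i : (i <= i + N)%N by exact: leq_addr.
have yB i : [/\ A (y (i + N)%N), enorm (y (i + N)%N) < r & y (i + N)%N != 0].
  by have [yAi yn] := yA (i + N)%N; split=> //; move: (hN _ (leq_addl i N)); rewrite subr0.
have [G1 [G2 [HD _ DhA dG1 _]]] := graph_direction yB (seq_cvg_reindex shiftN y0).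
have dE : d = dir G1 by apply: dG1; exact: seq_cvg_reindex shiftN yd.
rewrite dE in d1 ad; have G10 := dir_neq0 d1; have G20 := dir_neq0 (proj1 DhA).
pose t m := enorm (a m) / enorm G1.
have [tp t0] := enorm_ratio_vanishing G10 a0 (seq_cvg_dir_neq0 d1 ad).
have ar : \forall m \near \oo, enorm (a m) < r.
  by apply: filterS (proj1 (seq_cvgP _ _) a0 _ rp) => m; rewrite subr0.
have ha := tangent_image HD tp t0 ar (seq_o_dir G10 ad).
have ha0 : seq_cvg (fun m => h (a m)) 0.
  by apply: (seq_cvg0_le a0 (C := K2)) => //; apply: filterS ar => m; apply: bilip_upper0.
have [be [beA hbe]] :=
  hA _ ha0 (ex_intro _ (dir G2) (conj DhA (seq_cvg_dir_scale G20 tp ha))).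
have [q hq] := near_choice (P := fun m x => A x /\ enorm x < r /\ h x = be m) 0 beA.
exists q; split; first by apply: filterS hq => m [].
apply: (seq_o_rateW (C := K2)) => //.
  by apply: filterS ar => m; apply: bilip_upper0.
apply: (seq_o_normW (C := K1^-1)) hbe; first by rewrite invr_gt0.
by apply: filterS2 ar hq => m am [_ [qm <-]]; rewrite ler_pdivlMl //; apply: bilip_lower.
Qed.

End BiLipschitzGerm.


Theorem theorem4p7 (R : realType) (n : nat) (h : 'rV[R]_n -> 'rV[R]_n)
  (r K1 K2 : R) (A : 'rV[R]_n -> Prop) :
  bilip_homeo_germ h r K1 K2 -> SSP_map h r -> zero_in_closure A ->
  (SSP A <-> SSP (image_germ h r A)).
Proof.
move=> hbl hssp _; split=> hA; [exact: (SSP_image hbl hssp hA) | exact: (SSP_preimage hbl hssp hA)].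
Qed.
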